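(* Let $M,N\in\Lambda^{001}$. If for every $d\in\mathbf N$ there exists a $d$-positive resource term $s_d\in\mathcal T(M)\cap\mathcal T(N)$, then $M=N$.
   Context: $\Lambda^{001}$: possibly infinite λ-terms (trees of variables, abstractions $\lambda x.M$ and applications $(M)N$) whose infinite branches all enter infinitely often the argument position $N$ of an application, up to α-equivalence. Resource terms: $s::=x\mid\lambda x.s\mid\langle s\rangle\bar t$, with $\bar t=[t_1,\dots,t_n]$ a finite multiset of resource terms. Taylor approximation $\ltimes$ is inductive: $x\ltimes x$; $s\ltimes M\Rightarrow\lambda x.s\ltimes\lambda x.M$; ($s\ltimes M$ and $t_i\ltimes N$ for all $i$) $\Rightarrow\langle s\rangle[t_1,\dots,t_n]\ltimes(M)N$; $\mathcal T(M)=\{s : s\ltimes M\}$. $d$-positive resource terms: every resource term is 0-positive; for $d\ge1$, the $d$-positive terms are generated by $s::=x\mid\lambda x.s\mid\langle s\rangle\bar t$ where $s$ is $d$-positive and $\bar t$ is a non-empty multiset of $(d-1)$-positive terms. *)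

(* Possibly infinite lambda-terms as labelled trees over
   positions, with de Bruijn indices (so alpha-equivalence is built in). *)
From Stdlib Require Import List Arith.
Import ListNotations.

Inductive dir : Type := Body | Fun | Arg.

Inductive label : Type := LVar (n : nat) | LLam | LApp.

Definition tree : Type := list dir -> option label.

Definition wf_tree (t : tree) : Prop :=
  t [] <> None /\
  forall p : list dir,
    match t p with
    | None => forall d, t (p ++ [d]) = None
    | Some (LVar _) => forall d, t (p ++ [d]) = None
    | Some LLam => t (p ++ [Body]) <> None /\ t (p ++ [Fun]) = None
                   /\ t (p ++ [Arg]) = None
    | Some LApp => t (p ++ [Body]) = None /\ t (p ++ [Fun]) <> None
                   /\ t (p ++ [Arg]) <> None
    end.

Fixpoint prefix (f : nat -> dir) (n : nat) : list dir :=
  match n with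
  | 0 => []
  | S k => prefix f k ++ [f k]
  end.

Definition infinite_branch (t : tree) (f : nat -> dir) : Prop :=
  forall n, t (prefix f n) <> None.

Definition Lambda001 (t : tree) : Prop :=
  wf_tree t /\
  forall f, infinite_branch t f -> forall k, exists n, k <= n /\ f n = Arg.

(* Resource terms (de Bruijn); the finite multiset of arguments is a list
   (all notions below are invariant under permutation of it). *)
Inductive rterm : Type :=
| rvar (n : nat)
| rlam (s : rterm)
| rapp (s : rterm) (ts : list rterm).

Inductive approx (t : tree) : list dir -> rterm -> Prop :=
| approx_var p n : t p = Some (LVar n) -> approx t p (rvar n)
| approx_lam p s : t p = Some LLam -> approx t (p ++ [Body]) s ->
                   approx t p (rlam s)
| approx_app p s ts : t p = Some LApp -> approx t (p ++ [Fun]) s ->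
                   (forall u, In u ts -> approx t (p ++ [Arg]) u) ->
                   approx t p (rapp s ts).

Definition in_taylor (s : rterm) (M : tree) : Prop := approx M [] s.

Inductive dpositive : nat -> rterm -> Prop :=
| dpos_zero s : dpositive 0 s
| dpos_var d n : dpositive (S d) (rvar n)
| dpos_lam d s : dpositive (S d) s -> dpositive (S d) (rlam s)
| dpos_app d s ts : dpositive (S d) s -> ts <> [] ->
                    (forall u, In u ts -> dpositive d u) ->
                    dpositive (S d) (rapp s ts).

(* Unfolding a d-positive common approximant of M and N along a position p
   shows that M and N carry the same labels all along p as long as p passes
   through fewer than d argument positions: a d-positive term keeps at least
   one argument at each of its first d application nesting levels, so it
   witnesses the shape of both trees there, and below a missing node both
   trees are empty.  Every position passes through finitely many arguments. *)
From Stdlib Require Import List Arith Lia.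
Import ListNotations.

Fixpoint arg_count (p : list dir) : nat :=
  match p with
  | [] => 0
  | Arg :: r => S (arg_count r)
  | _ :: r => arg_count r
  end.

(* Moving to an argument consumes one level of positivity. *)
Definition depth_after (a : dir) (d : nat) : nat :=
  match a with Arg => pred d | _ => d end.

Definition root_label (u : rterm) : label :=
  match u with
  | rvar n => LVar n
  | rlam _ => LLam
  | rapp _ _ => LApp
  end.

Lemma wf_tree_none_app (t : tree) (q r : list dir) :
  wf_tree t -> t q = None -> t (q ++ r) = None.
Proof.
  intros [_ Wt]. revert q. induction r as [|d r IH]; intros q Hq.
  - now rewrite app_nil_r.
  - replace (q ++ d :: r) with ((q ++ [d]) ++ r) by now rewrite <- app_assoc.
    apply IH. specialize (Wt q). rewrite Hq in Wt. apply Wt.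
Qed.

Lemma approx_root_label (t : tree) (q : list dir) (u : rterm) :
  approx t q u -> t q = Some (root_label u).
Proof. now destruct 1. Qed.

Lemma approx2_child (M N : tree) (q : list dir) (a : dir) (d : nat) (u : rterm) :
  wf_tree M -> wf_tree N -> 0 < d -> dpositive d u ->
  approx M q u -> approx N q u ->
  (M (q ++ [a]) = None /\ N (q ++ [a]) = None) \/
  exists u', dpositive (depth_after a d) u' /\
             approx M (q ++ [a]) u' /\ approx N (q ++ [a]) u'.
Proof.
  intros [_ WM] [_ WN] Hd Hpos HM HN.
  specialize (WM q). specialize (WN q).
  rewrite (approx_root_label _ _ _ HM) in WM.
  rewrite (approx_root_label _ _ _ HN) in WN.
  destruct d as [|d]; [lia|].
  destruct u as [n|s|s ts]; simpl in WM, WN.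
  - left; auto.
  - destruct a; [|left; tauto|left; tauto].
    inversion HM; inversion HN; inversion Hpos; subst.
    right; eauto.
  - destruct a; [left; tauto| |].
    + inversion HM; inversion HN; inversion Hpos; subst.
      right; eauto.
    + inversion HM; inversion HN; inversion Hpos; subst.
      destruct ts as [|u ts]; [congruence|].
      right; exists u; repeat split; auto with datatypes.
Qed.

Lemma dpositive_approx2_agree (M N : tree) (p : list dir) :
  wf_tree M -> wf_tree N ->
  forall (q : list dir) (d : nat) (u : rterm),
  arg_count p < d -> dpositive d u -> approx M q u -> approx N q u ->
  M (q ++ p) = N (q ++ p).
Proof.
  intros WM WN. induction p as [|a p IH]; intros q d u Hp Hpos HM HN.
  - rewrite app_nil_r, (approx_root_label _ _ _ HM).
    now rewrite (approx_root_label _ _ _ HN).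
  - replace (q ++ a :: p) with ((q ++ [a]) ++ p) by now rewrite <- app_assoc.
    assert (Hd : 0 < d) by lia.
    destruct (approx2_child M N q a d u WM WN Hd Hpos HM HN)
      as [[HMa HNa] | (u' & Hpos' & HM' & HN')].
    + now rewrite (wf_tree_none_app _ _ p WM HMa), (wf_tree_none_app _ _ p WN HNa).
    + apply (IH _ (depth_after a d) u'); auto.
      destruct a; simpl in *; lia.
Qed.

Theorem mainTheorem19 (M N : tree) :
  Lambda001 M -> Lambda001 N ->
  (forall d : nat, exists s : rterm,
     dpositive d s /\ in_taylor s M /\ in_taylor s N) ->
  forall p : list dir, M p = N p.
Proof.
  intros [WM _] [WN _] Hcommon p.
  destruct (Hcommon (S (arg_count p))) as (s & Hpos & HM & HN).
  exact (dpositive_approx2_agree M N p WM WN [] _ s (Nat.lt_succ_diag_r _) Hpos HM HN).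
Qed.
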